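(* Let $k \geq 1$ be an integer. The consensus number of the atomic $k$-sliding read/write register type is at least $k$; that is, in an asynchronous system of $k$ crash-prone processes communicating through atomic read/write registers and $k$-sliding read/write registers, there is a wait-free algorithm implementing a consensus object.
   Context: System model: $n$ sequential asynchronous processes $p_1,\dots,p_n$ communicating through shared atomic objects; any number of processes may crash (halt prematurely, never recovering); implementations must be wait-free (every operation invoked by a non-crashed process terminates regardless of the behavior of the others). A consensus object provides a single operation $\mathrm{propose}(v)$, invoked at most once per process and returning a value, satisfying: Validity (a decided value was proposed by some process), Agreement (no two processes decide different values), Termination (every correct process that invokes $\mathrm{propose}()$ decides). The consensus number of an object type $T$ is the largest $n$ such that consensus can be wait-free implemented among $n$ processes using atomic read/write registers and objects of type $T$ ($+\infty$ if no such finite $n$ exists). An atomic $k$-sliding read/write register is a shared object whose state is a sequence of values (initially empty), with two atomic (linearizable) operations: $\mathrm{write}(v)$ appends $v$ to the end of the sequence, and $\mathrm{read}()$ returns the ordered sequence of the last $k$ values written before it in the linearization order, where if only $x<k$ values have been written the $k-x$ missing values are replaced by a default value $\bot$. *)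

From mathcomp Require Import all_boot.
Unset Strict Implicit. Unset Printing Implicit Defensive.

(* A read returns a
   sequence of (optional, None = bottom) values, after which the process moves
   to a local state computed from the response; a write appends a value. *)
Inductive action (V Val S : Type) (m : nat) : Type :=
  | ADecide of V
  | ARead of 'I_m & (seq (option Val) -> S)
  | AWrite of 'I_m & Val & S.

(* The algorithm may use any finite
   number n_obj of shared objects; object o is a k-sliding register if
   is_sliding o, and an ordinary atomic read/write register otherwise. *)
Record algorithm (V : Type) (n : nat) : Type := Algorithm {
  n_obj : nat;
  is_sliding : 'I_n_obj -> bool;
  val_t : Type;
  lstate : Type;
  start : 'I_n -> V -> lstate;              (* state when invoking propose(v) *)
  next : 'I_n -> lstate -> action V val_t lstate n_obj }.
Arguments n_obj {V n}. Arguments is_sliding {V n}. Arguments val_t {V n}.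
Arguments lstate {V n}. Arguments start {V n}. Arguments next {V n}.

(* The last w values of the write history h (oldest first), the missing ones
   (if fewer than w values were written) being replaced by bottom = None. *)
Definition window {T : Type} (w : nat) (h : seq T) : seq (option T) :=
  nseq (w - size h) None ++ map Some (drop (size h - w) h).

Section Semantics.
Variables (V : Type) (n k : nat) (A : algorithm V n).
Arguments ADecide {V Val S m}.
Arguments ARead {V Val S m}.
Arguments AWrite {V Val S m}.

(* Global configuration: local states, and the write history of each object
   (the state of a k-sliding register is the sequence of values written; an
   ordinary register is modelled the same way, a read returning the last value
   written, or bottom). *)
Record config := Config {
  c_loc : 'I_n -> lstate A;
  c_mem : 'I_(n_obj A) -> seq (val_t A) }.

Definition init_config (inp : 'I_n -> V) : config :=
  Config (fun i => start A i (inp i)) (fun _ => [::]).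

Definition read_resp (o : 'I_(n_obj A)) (h : seq (val_t A)) :=
  window (if is_sliding A o then k else 1) h.

Definition step (s : option 'I_n) (c : config) : config :=
  match s with
  | None => c
  | Some i =>
    match next A i (c_loc c i) with
    | ADecide _ => c
    | ARead o f =>
        Config (fun j => if j == i then f (read_resp o (c_mem c o)) else c_loc c j)
               (c_mem c)
    | AWrite o x s' =>
        Config (fun j => if j == i then s' else c_loc c j)
               (fun o' => if o' == o then rcons (c_mem c o) x else c_mem c o')
    end
  end.

(* An execution is determined by the inputs and an arbitrary (adversarial)
   schedule; a process that crashes simply stops being scheduled; a process
   that is never scheduled never invokes propose(). *)
Fixpoint run (inp : 'I_n -> V) (sched : nat -> option 'I_n) (t : nat) : config :=
  match t with
  | 0 => init_config inp
  | t'.+1 => step (sched t') (run inp sched t')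
  end.

Definition decides inp sched (i : 'I_n) (t : nat) (v : V) : Prop :=
  sched t = Some i /\ next A i (c_loc (run inp sched t) i) = ADecide v.

Definition correct (sched : nat -> option 'I_n) (i : 'I_n) : Prop :=
  forall t, exists t', t <= t' /\ sched t' = Some i.

Definition wait_free_consensus : Prop :=
  forall (inp : 'I_n -> V) (sched : nat -> option 'I_n),
    (forall i j t t' v w, decides inp sched i t v -> decides inp sched j t' w -> v = w) /\
    (* Validity: the decided value was proposed by a process that invoked propose *)
    (forall i t v, decides inp sched i t v ->
       exists j t', t' <= t /\ sched t' = Some j /\ v = inp j) /\
    (forall i, correct sched i -> exists t v, decides inp sched i t v).

End Semantics.

(* Every process appends its input to one k-sliding register and then reads it,
   deciding the oldest value it sees.  Each process writes at most once, so at
   most k values are ever written and a read returns the whole write history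
   (padded with bottoms); all readers therefore see the same first value,
   which was proposed by the first writer. *)
From mathcomp Require Import all_boot zify.

Set Implicit Arguments.
Unset Strict Implicit.

Arguments ADecide {V Val S m}.
Arguments ARead {V Val S m}.
Arguments AWrite {V Val S m}.

Inductive phase (V : Type) : Type := Writing of V | Reading | Done of V.
Arguments Writing {V}. Arguments Reading {V}. Arguments Done {V}.

Definition is_writing {V : Type} (s : phase V) : bool :=
  if s is Writing _ then true else false.

Definition progress {V : Type} (s : phase V) : nat :=
  match s with Writing _ => 0 | Reading => 1 | Done _ => 2 end.

Definition oldest {T : Type} (r : seq (option T)) : option T := ohead (pmap id r).

Lemma oldest_window (T : Type) (w : nat) (h : seq T) :
  size h <= w -> oldest (window w h) = ohead h.
Proof.
rewrite -subn_eq0 /oldest /window => /eqP ->; rewrite drop0 pmap_cat.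
have -> : pmap id (nseq (w - size h) (@None T)) = [::] by elim: (w - size h).
by rewrite (map_pK (g := Some) (f := id)).
Qed.

Lemma ohead_cat (T : Type) (h s : seq T) v : ohead h = Some v -> ohead (h ++ s) = Some v.
Proof. by case: h. Qed.

Section Algorithm.
Variables (V : Type) (k : nat).

Definition consensus_next (s : phase V) : action V V (phase V) 1 :=
  match s with
  | Writing v => AWrite ord0 v Reading
  | Reading => ARead ord0 (fun r => if oldest r is Some v then Done v else Reading)
  | Done v => ADecide v
  end.

Definition sliding_consensus : algorithm V k :=
  @Algorithm V k 1 (fun _ => true) V (phase V) (fun _ v => Writing v)
    (fun _ s => consensus_next s).

Definition advance (h : seq V) (s : phase V) : phase V :=
  match s with
  | Writing _ => Reading
  | Reading => if oldest (window k h) is Some v then Done v else Reading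
  | Done v => Done v
  end.

Lemma is_writing_advance h s : is_writing (advance h s) = false.
Proof. by case: s => [?||?] //=; case: (oldest (window k h)). Qed.

Definition written (s : phase V) : seq V := if s is Writing v then [:: v] else [::].

Variables (inp : 'I_k -> V) (sched : nat -> option 'I_k).

Let cfg t := run V k k sliding_consensus inp sched t.
Let hist t : seq V := c_mem V k sliding_consensus (cfg t) ord0.
Let state t : 'I_k -> phase V := c_loc V k sliding_consensus (cfg t).

Lemma stateS t j :
  state t.+1 j = if sched t == Some j then advance (hist t) (state t j) else state t j.
Proof.
rewrite /state /hist /cfg /=; set c := run _ _ _ _ _ _ t.
case: (sched t) => [i|] //=; case: (eqVneq i j) => [<-|ne].
  by rewrite eqxx; case E: (c_loc _ _ _ c i) => [v||v] /=; rewrite ?eqxx ?E.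
rewrite (inj_eq (@Some_inj _)) (negbTE ne).
by case: (c_loc _ _ _ c i) => [v||v] /=; rewrite // eq_sym (negbTE ne).
Qed.

Lemma histS t :
  hist t.+1 = hist t ++ (if sched t is Some i then written (state t i) else [::]).
Proof.
rewrite /state /hist /cfg /=; set c := run _ _ _ _ _ _ t.
case: (sched t) => [i|] /=; last by rewrite cats0.
by case: (c_loc _ _ _ c i) => [v||v] /=; rewrite ?cats0 // cats1.
Qed.

Definition writers t : {set 'I_k} := [set i | is_writing (state t i)].

Lemma writersS t :
  writers t.+1 = if sched t is Some i then writers t :\ i else writers t.
Proof.
apply/setP=> j; rewrite !inE stateS.
case: (sched t) => [i|]; rewrite !inE //.
rewrite (inj_eq (@Some_inj _)) eq_sym; case: eqP => [->|_] //=.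
by rewrite is_writing_advance.
Qed.

Lemma size_hist_writers t : size (hist t) + #|writers t| = k.
Proof.
elim: t => [|t IH].
  by rewrite add0n -[RHS]card_ord; apply: eq_card => i; rewrite inE.
rewrite histS writersS size_cat; case: (sched t) => [i|]; last by rewrite addn0.
rewrite -[in RHS]IH (cardsD1 i (writers t)) inE -addnA.
by case: (state t i).
Qed.

Lemma size_hist_le t : size (hist t) <= k.
Proof. by rewrite -(size_hist_writers t) leq_addr. Qed.

Lemma writing_input t i v : state t i = Writing v -> v = inp i.
Proof.
elim: t => [/= [->] //|t IH]; rewrite stateS; case: eqP => _ // E.
by have := is_writing_advance (hist t) (state t i); rewrite E.
Qed.

Lemma hist_nonempty t i : ~~ is_writing (state t i) -> 0 < size (hist t).
Proof.
elim: t => [//|t IH]; rewrite histS stateS size_cat.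
case: (eqVneq (sched t) (Some i)) => [-> _|_ /IH /ltn_addr //].
by case: (state t i) IH => [v||v] /= IH; rewrite ?addn1 // ltn_addr ?IH.
Qed.

Lemma ohead_hist_mono t t' v :
  t <= t' -> ohead (hist t) = Some v -> ohead (hist t') = Some v.
Proof.
move=> le; apply: (@homo_leq _ hist
  (fun a b => forall v, ohead a = Some v -> ohead b = Some v)) le v.
- by [].
- by move=> ? ? ? H1 H2 w /H1 /H2.
- by move=> n w; rewrite histS; apply: ohead_cat.
Qed.

Lemma done_oldest t i v : state t i = Done v -> ohead (hist t) = Some v.
Proof.
elim: t => [//|t IH].
rewrite stateS histS => D; apply: ohead_cat; move: D.
case: eqP => [_|_ /IH //].
case: (state t i) IH => [w||w] //= IH.
by rewrite oldest_window ?size_hist_le //; case: ohead => // u [->].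
Qed.

Lemma oldest_proposed t v : ohead (hist t) = Some v ->
  exists j t', [/\ t' < t, sched t' = Some j & v = inp j].
Proof.
elim: t => [//|t IH]; rewrite histS.
case E: (hist t) IH => [|x h] /= IH; last first.
  by move=> /IH [j [t' [lt s e]]]; exists j, t'; split => //; apply: ltnW.
case S: (sched t) => [i|] //; case W: (state t i) => [w||w] //= [<-].
by exists i, t; split => //; apply: writing_input W.
Qed.

Lemma progress_mono t t' j : t <= t' -> progress (state t j) <= progress (state t' j).
Proof.
apply: (@homo_leq _ (fun t => progress (state t j)) (fun a b => a <= b) leqnn
  (fun y x z => @leq_trans y x z)) => t0.
rewrite stateS; case: eqP => // _.
by case: (state t0 j) => [?||?] //=; case: (oldest (window k (hist t0))).
Qed.

Lemma progress_scheduled t j :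
  sched t = Some j -> minn (progress (state t j)).+1 2 <= progress (state t.+1 j).
Proof.
rewrite stateS => ->; rewrite eqxx; case E: (state t j) => [v||v] //=.
have := @hist_nonempty t j; rewrite E oldest_window ?size_hist_le //.
by move/(_ isT); case: (hist t).
Qed.

Lemma correct_reaches_done i : correct k sched i -> exists t, 2 <= progress (state t i).
Proof.
move=> corr; suff reach n : exists t, minn n 2 <= progress (state t i) by apply: reach 2.
elim: n => [|n [t le]]; first by exists 0.
have [t' [tt' s]] := corr t; exists t'.+1.
apply: leq_trans _ (progress_scheduled s).
have := progress_mono i tt'; lia.
Qed.

Let decides_by := decides V k k sliding_consensus inp sched.

Lemma decides_done i t v : decides_by i t v -> state t i = Done v.
Proof.
case=> _; change (consensus_next (state t i) = ADecide v -> state t i = Done v).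
by case: (state t i) => // ? [->].
Qed.

Lemma consensus_agreement i j t t' v w : decides_by i t v -> decides_by j t' w -> v = w.
Proof.
move=> /decides_done Di /decides_done Dj.
wlog le : t t' i j v w Di Dj / t <= t'.
  move=> H; case: (leqP t t') => [|/ltnW] le; first exact: H Di Dj le.
  by symmetry; apply: H Dj Di le.
by have := ohead_hist_mono le (done_oldest Di); rewrite (done_oldest Dj) => -[].
Qed.

Lemma consensus_validity i t v : decides_by i t v ->
  exists j t', t' <= t /\ sched t' = Some j /\ v = inp j.
Proof.
move=> /decides_done /done_oldest /oldest_proposed [j [t' [lt s e]]].
by exists j, t'; split; [apply: ltnW | split].
Qed.

Lemma consensus_termination i : correct k sched i -> exists t v, decides_by i t v.
Proof.
move=> corr; have [t done] := correct_reaches_done corr.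
have [t' [le s]] := corr t; have := leq_trans done (progress_mono i le).
case E: (state t' i) => [||v] // _; exists t', v; split => //.
by change (consensus_next (state t' i) = ADecide v); rewrite E.
Qed.

End Algorithm.

Theorem theorem1 (k : nat) (hk : 1 <= k) (V : Type) :
  exists A : algorithm V k, wait_free_consensus V k k A.
Proof.
exists (sliding_consensus V k) => inp sched; split; last split.
- exact: consensus_agreement.
- exact: consensus_validity.
- exact: consensus_termination.
Qed.
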